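(* Let $k\geq 3$ be an integer and let $G$ be a graph on $n$ vertices with minimum degree $\delta(G)\geq\delta>\frac{(k-1)n}{k}$, with at least two $K_{k+1}$-components, and such that $G[\mathrm{int}_k(G)]$ contains no copy of $K_k$. Let $C_1,\dots,C_p$ be the $K_{k+1}$-components of $G$ and set $q':=k\delta-(k-1)n+\sum_{j\neq 1}|\mathrm{ext}(C_j)|-|\mathrm{ext}(C_1)|$. Then $CK_{k+1}F(G)\geq(k+1)\min\left\{k\delta-(k-1)n,\left\lfloor\frac{|\mathrm{ext}(C_1)|}{2}\right\rfloor,q'\right\}$.
   Context: A $K_{k+1}$-walk in $G$ is a sequence of copies of $K_k$ in which consecutive copies lie in a common copy of $K_{k+1}$; its endpoints are then $K_{k+1}$-connected; the equivalence classes of copies of $K_k$ are the $K_{k+1}$-components. The vertices of a component are the vertices of its copies of $K_k$. $\mathrm{int}_k(G)$ is the set of vertices lying in more than one component; $\mathrm{ext}(C)$ is the set of vertices of $C$ lying in no other component. A $K_{k+1}$-factor is a set of vertex-disjoint copies of $K_{k+1}$; it is connected if all copies of $K_k$ contained in its members lie in one component; its size is the number of covered vertices; $CK_{k+1}F(G)$ is the maximum size of a connected $K_{k+1}$-factor in $G$. *)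

(* Graph = symmetric irreflexive relation e on a finType T. *)
From mathcomp Require Import all_boot all_order all_algebra.
Set Implicit Arguments. Unset Strict Implicit. Unset Printing Implicit Defensive.
Import Order.TTheory GRing.Theory Num.Theory.

Section Cliques.
Variables (T : finType) (e : rel T).

Definition is_clique (A : {set T}) : bool :=
  [forall x in A, forall y in A, (x != y) ==> e x y].

Definition kcopies (k : nat) : {set {set T}} :=
  [set A : {set T} | (#|A| == k) && is_clique A].

Definition kstep (k : nat) : rel {set T} := fun A B =>
  [&& A \in kcopies k, B \in kcopies k &
      [exists C in kcopies k.+1, (A \subset C) && (B \subset C)]].

Definition kconn (k : nat) (A B : {set T}) : bool := connect (kstep k) A B.

Definition kcomp (k : nat) (A : {set T}) : {set {set T}} :=
  [set B in kcopies k | kconn k A B].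

Definition kcomps (k : nat) : {set {set {set T}}} :=
  [set kcomp k A | A in kcopies k].

Definition compV (C : {set {set T}}) : {set T} := cover C.

Definition int_k (k : nat) : {set T} :=
  [set v | [exists C1 in kcomps k, exists C2 in kcomps k,
             [&& C1 != C2, v \in compV C1 & v \in compV C2]]].

Definition ext (k : nat) (C : {set {set T}}) : {set T} :=
  [set v in compV C | [forall C' in kcomps k, (C' != C) ==> (v \notin compV C')]].

Definition conn_factor (k : nat) (F : {set {set T}}) : bool :=
  [&& F \subset kcopies k.+1, trivIset F &
      [forall A in kcopies k, forall B in kcopies k,
         ([exists X in F, A \subset X] && [exists Y in F, B \subset Y])
           ==> kconn k A B]].

Definition CKF (k : nat) : nat :=
  \max_(F : {set {set T}} | conn_factor k F) #|cover F|.

End Cliques.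

From mathcomp Require Import all_boot all_order all_algebra zify.

(* Let d = |T| - delta, so that every vertex has at most d non-neighbours
   (itself included) and k d < |T|.  Let X = ext(C1), I = int_k(G) and let Y be
   the remaining vertices.  An edge from X to Y extends greedily to a copy of
   K_k; it lies in C1, so its end in Y also lies in another component, i.e. in
   I: hence X has no neighbours in Y.  Since G[I] is K_k-free, greedily removing
   copies of K_{k-1} from I leaves a packing of them that misses at most
   (k-2) d vertices of I.  Now let m be a natural number at most the minimum
   of the statement (there is nothing to prove if it is negative).  The degree
   bounds give G[X] minimum degree at least m on at least 2m vertices,
   hence a matching with m edges, and make every vertex of X non-adjacent to few
   packing blocks, so the matching edges can be given distinct blocks complete
   to them.  Each edge with its block spans a K_{k+1} whose copies of K_k all
   meet X = ext(C1), hence lie in C1: these m cliques form a connected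
   K_{k+1}-factor covering (k+1) m vertices. *)

Set Implicit Arguments.
Unset Strict Implicit.
Unset Printing Implicit Defensive.

Section SetFamilies.
Variable T : finType.
Notation disjointr := (fun A B : {set T} => [disjoint A & B]).

Lemma cardsU_disjoint (A B : {set T}) : [disjoint A & B] -> #|A :|: B| = #|A| + #|B|.
Proof. by move=> AB; rewrite cardsU (disjoint_setI0 AB) cards0 subn0. Qed.

Lemma pair_subset (x y : T) (D : {set T}) : x \in D -> y \in D -> [set x; y] \subset D.
Proof. by move=> xD yD; apply/subsetP => z; rewrite !inE => /orP[]/eqP->. Qed.

Lemma card_bigcup_le (I : finType) (P : pred I) (F : I -> {set T}) :
  #|\bigcup_(i | P i) F i| <= \sum_(i | P i) #|F i|.
Proof.
apply: (big_ind2 (fun (A : {set T}) n => #|A| <= n)) => [|A m B n hA hB|//].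
  by rewrite cards0.
exact: leq_trans (leq_card_setU A B).1 (leq_add hA hB).
Qed.

Lemma card_bigcup_disjoint (I : finType) (P : pred I) (F : I -> {set T}) :
  {in P &, forall i j, i != j -> [disjoint F i & F j]} ->
  #|\bigcup_(i | P i) F i| = \sum_(i | P i) #|F i|.
Proof.
move=> disjF; pose G i := if P i then F i else set0.
have -> : \bigcup_(i | P i) F i = \bigcup_i G i by rewrite big_mkcond.
rewrite -sum1_card partition_disjoint_bigcup => [|i j ij]; last first.
  rewrite /G -setI_eq0; case: ifP => iP; case: ifP => jP; rewrite ?setI0 ?set0I //.
  by rewrite setI_eq0; apply: disjF.
rewrite [RHS]big_mkcond; apply: eq_bigr => i _; rewrite /G sum1_card.
by case: ifP; rewrite ?cards0.
Qed.

Lemma trivIset_pairwise (s : seq {set T}) :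
  pairwise disjointr s -> trivIset [set A in s].
Proof.
move=> ps; have : pairwise (fun A B : {set T} => (A == B) || [disjoint A & B]) s.
  by apply: sub_pairwise ps => A B ->; rewrite orbT.
rewrite pairwise_all2rel => [/allrelP hs|A|A B]; last first.
- by rewrite eq_sym disjoint_sym.
- by rewrite eqxx.
apply/trivIsetP => A B; rewrite !inE => As Bs AB.
by have := hs A B As Bs; rewrite (negbTE AB).
Qed.

Lemma card_cover_pairwise (s : seq {set T}) n :
  0 < n -> all (fun A : {set T} => #|A| == n) s -> pairwise disjointr s ->
  #|cover [set A in s]| = n * size s.
Proof.
move=> n_gt0 sn ps.
have us : uniq s.
  apply: (pairwise_uniq (r := fun A B : {set T} => A != B)) => [A|]; first by rewrite eqxx.
  apply: (@sub_in_pairwise _ (fun A : {set T} => #|A| == n) _ _ _ s sn ps).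
  move=> A B /eqP An _ AB; apply/eqP => eAB.
  by move: AB; rewrite -eAB -setI_eq0 setIid => /eqP A0; rewrite A0 cards0 in An; lia.
rewrite -(eqP (trivIset_pairwise ps)) (eq_bigr (fun _ => n)) => [|A]; last first.
  by rewrite inE => /(allP sn)/eqP.
by rewrite sum_nat_const cardsE (card_uniqP us) mulnC.
Qed.

End SetFamilies.

Section Cliques.
Variables (T : finType) (e : rel T).
Hypotheses (e_sym : symmetric e) (e_irr : irreflexive e).

Lemma is_cliqueP (A : {set T}) :
  reflect {in A &, forall x y, x != y -> e x y} (is_clique e A).
Proof.
apply: (iffP forallP) => [cA x y xA yA | cA x].
  by move: (cA x); rewrite xA => /forall_inP/(_ y yA)/implyP.
by apply/implyP => xA; apply/forall_inP => y yA; apply/implyP; apply: cA.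
Qed.

Lemma is_clique0 : is_clique e set0.
Proof. by apply/is_cliqueP => x y; rewrite inE. Qed.

Lemma is_cliqueU1 z (A : {set T}) :
  is_clique e A -> {in A, forall a, e a z} -> is_clique e (z |: A).
Proof.
move=> /is_cliqueP cA zA; apply/is_cliqueP => x y.
rewrite !inE => /predU1P[->|xA] /predU1P[->|yA]; rewrite ?eqxx //.
- by rewrite e_sym zA.
- by rewrite zA.
- exact: cA.
Qed.

Lemma is_clique2 x y : e x y -> is_clique e [set x; y].
Proof.
move=> exy; apply: is_cliqueU1 => [|z]; last by rewrite inE => /eqP->; rewrite e_sym.
by apply/is_cliqueP => a b; rewrite !inE => /eqP-> /eqP->; rewrite eqxx.
Qed.

(* [v] itself counts when [v \in S]. *)
Definition non_nbrs (S : {set T}) v := [set z in S | ~~ e v z].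

Lemma non_nbrs_sub S v : non_nbrs S v \subset S.
Proof. by apply/subsetP => z; rewrite inE => /andP[]. Qed.

Lemma card_nbrs_non_nbrs (S : {set T}) u :
  #|[set z in S | e u z]| + #|non_nbrs S u| = #|S|.
Proof.
rewrite -cardsU_disjoint.
  by apply: eq_card => z; rewrite !inE; case: (z \in S); case: (e u z).
by rewrite -setI_eq0; apply/eqP/setP => z; rewrite !inE; case: (e u z); rewrite ?andbF.
Qed.

Lemma card_non_nbrs_split (X I : {set T}) a :
  [disjoint X & I] -> {in ~: (X :|: I), forall w, ~~ e a w} ->
  #|non_nbrs I a| + #|~: (X :|: I)| + #|non_nbrs X a| <= #|non_nbrs setT a|.
Proof.
move=> XI aY.
have dIY : [disjoint non_nbrs I a & ~: (X :|: I)].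
  by apply: disjointWl (non_nbrs_sub I a) _; rewrite disjoints_subset setCK subsetUr.
have dIYX : [disjoint non_nbrs I a :|: ~: (X :|: I) & non_nbrs X a].
  rewrite disjoint_sym; apply: disjointWl (non_nbrs_sub X a) _.
  rewrite disjoints_subset setCU subsetI setCK subsetUl andbT -disjoints_subset.
  exact: disjointWr (non_nbrs_sub I a) XI.
rewrite -!cardsU_disjoint //; apply: subset_leq_card; apply/subsetP => z.
rewrite !in_setU => /orP[/orP[|/aY naz]|]; rewrite !inE ?naz //.
  by case/andP.
by case/andP.
Qed.

Definition common_nbrs (S A : {set T}) := [set z in S | [forall a in A, e a z]].

Lemma card_common_nbrs (S A : {set T}) c :
  {in S, forall v, #|non_nbrs S v| <= c} -> A \subset S ->
  #|S| <= #|common_nbrs S A| + #|A| * c.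
Proof.
move=> hc sAS.
have sub : S \subset common_nbrs S A :|: \bigcup_(a in A) non_nbrs S a.
  apply/subsetP => z zS; rewrite !inE zS /=.
  case: (boolP [forall a in A, e a z]) => //= /forall_inPn [a aA naz].
  by apply/bigcupP; exists a; rewrite // inE zS.
apply: leq_trans (subset_leq_card sub) _.
apply: leq_trans (leq_card_setU _ _).1 _; rewrite leq_add2l.
apply: leq_trans (card_bigcup_le _ _) _.
rewrite -sum_nat_const; apply: leq_sum => a aA; exact: hc (subsetP sAS a aA).
Qed.

Lemma clique_extend (S : {set T}) c r :
  {in S, forall v, #|non_nbrs S v| <= c} -> r.-1 * c < #|S| ->
  forall A, is_clique e A -> A \subset S -> #|A| <= r ->
  exists2 A' : {set T}, A \subset A' & [/\ A' \subset S, is_clique e A' & #|A'| = r].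
Proof.
move=> hc hr A; move hj: (r - #|A|) => j.
elim: j A hj => [|j IH] A hj cA sAS hAr; first by exists A => //; split => //; lia.
have : 0 < #|common_nbrs S A|.
  have := card_common_nbrs hc sAS; have := leq_mul (_ : #|A| <= r.-1) (leqnn c).
  lia.
case/card_gt0P => z; rewrite inE => /andP[zS /forall_inP zA].
have zNA : z \notin A by apply/negP => /zA; rewrite e_irr.
have cardzA : #|z |: A| = #|A|.+1 by rewrite cardsU1 zNA.
have [|||A' szA' hA'] := IH (z |: A) _ (is_cliqueU1 cA zA).
- by rewrite cardzA; lia.
- by rewrite subUset sub1set zS.
- by rewrite cardzA; lia.
by exists A' => //; apply: subset_trans (subsetUr _ _) szA'.
Qed.

Lemma clique_exists (S : {set T}) c r :
  {in S, forall v, #|non_nbrs S v| <= c} -> r.-1 * c < #|S| ->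
  exists A : {set T}, [/\ A \subset S, is_clique e A & #|A| = r].
Proof.
move=> hc hr; have [|A _ hA] := clique_extend hc hr is_clique0 (sub0set S).
  by rewrite cards0.
by exists A.
Qed.

Definition clique_packing r (S : {set T}) (P : {set {set T}}) :=
  trivIset P /\
  forall B : {set T}, B \in P -> [/\ B \subset S, #|B| = r & is_clique e B].

Lemma clique_packing0 r S : clique_packing r S set0.
Proof. by split => [|B]; rewrite ?inE //; apply/trivIsetP => B; rewrite inE. Qed.

Definition clique_free k (S : {set T}) :=
  forall A : {set T}, A \subset S -> #|A| = k -> ~~ is_clique e A.

Lemma card_non_nbrs_setD k (S B : {set T}) v :
  0 < k -> clique_free k S -> B \subset S -> is_clique e B -> #|B| = k.-1 ->
  v \in S :\: B -> #|non_nbrs (S :\: B) v| < #|non_nbrs S v|.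
Proof.
move=> k_gt0 Sfree sBS cB cardB; rewrite inE => /andP[vB vS].
have /forall_inPn[b bB nvb] : ~~ [forall b in B, e v b].
  have svB : v |: B \subset S by rewrite subUset sub1set vS sBS.
  have cardvB : #|v |: B| = k by rewrite cardsU1 vB cardB; lia.
  apply/negP => /forall_inP vB'; move/negP: (Sfree _ svB cardvB); apply.
  by apply: is_cliqueU1 => // b' /vB'; rewrite e_sym.
apply: proper_card; apply/properP; split.
  by apply/subsetP => z; rewrite !inE => /andP[/andP[_ ->] ->].
by exists b; rewrite !inE ?bB ?(subsetP sBS b bB).
Qed.

Lemma clique_free_packing k (S : {set T}) c : 1 < k -> clique_free k S ->
  {in S, forall v, #|non_nbrs S v| <= c} ->
  exists2 P, clique_packing k.-1 S P & #|S| <= #|P| + k.-2 * c.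
Proof.
move=> k_gt1; elim: c S => [|c IH] S Sfree hc.
  have -> : S = set0.
    apply/setP => v; rewrite inE; apply/negP => vS.
    by have := hc v vS; rewrite leqn0 cards_eq0 => /eqP/setP/(_ v); rewrite !inE vS e_irr.
  by exists set0; [apply: clique_packing0 | rewrite cards0].
have [small|] := leqP #|S| (k.-2 * c.+1).
  by exists set0; [apply: clique_packing0 | rewrite cards0].
rewrite -[k.-2]/(k.-1.-1) => /(clique_exists hc) [B [sBS cB cardB]].
set S' := S :\: B.
have S'free : clique_free k S'.
  by move=> A sAS'; apply: Sfree (subset_trans sAS' (subsetDl S B)).
have hc' : {in S', forall v, #|non_nbrs S' v| <= c}.
  move=> v vS'; have := card_non_nbrs_setD (ltnW k_gt1) Sfree sBS cB cardB vS'; rewrite -/S'.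
  by move: vS'; rewrite inE => /andP[_ /hc]; lia.
have [P' [tP' hP'] cardP'] := IH S' S'free hc'.
have disjBP' : {in P', forall B' : {set T}, [disjoint B & B']}.
  move=> B' /hP'[sB'S' _ _]; rewrite disjoint_sym disjoints_subset.
  by apply: subset_trans sB'S' _; apply/subsetP => z; rewrite !inE => /andP[].
have [tBP' BP'] : trivIset (B |: P') /\ B \notin P'.
  apply: trivIsetU1 disjBP' tP' _; apply/negP => /hP'[_ card0 _].
  by rewrite cards0 in card0; lia.
exists (B |: P'); first split => // B'.
  case/setU1P => [->|/hP'[sB'S' ? ?]]; split => //.
  exact: subset_trans sB'S' (subsetDl S B).
have cardS' : #|S'| = #|S| - k.-1 by rewrite cardsD (setIidPr sBS) cardB.
rewrite cardsU1 BP' mulnS; lia.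
Qed.

End Cliques.

Lemma big_seq_gt_const (I : eqType) (s : seq I) (f : I -> nat) c :
  c * size s < \sum_(i <- s) f i -> exists2 i, i \in s & c < f i.
Proof.
elim: s => [|i s IH]; first by rewrite big_nil ltn0.
rewrite big_cons /= mulnS; case: (ltnP c (f i)) => [ci _|fic hs].
  by exists i; rewrite ?mem_head.
have [|j js cj] := IH; first by lia.
by exists j; rewrite // in_cons js orbT.
Qed.

Section Matchings.
Variables (T : finType) (e : rel T).
Hypothesis e_irr : irreflexive e.

Definition ends (M : seq (T * T)) : seq T := flatten [seq [:: p.1; p.2] | p <- M].
Arguments ends : simpl never.

Lemma ends_cons p M : ends (p :: M) = p.1 :: p.2 :: ends M.
Proof. by []. Qed.

Definition matching_in (X : {set T}) (M : seq (T * T)) :=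
  uniq (ends M) && all (fun p => [&& p.1 \in X, p.2 \in X & e p.1 p.2]) M.

Lemma size_ends M : size (ends M) = 2 * size M.
Proof. by elim: M => // p M IH; rewrite ends_cons /= IH mulnS. Qed.

Lemma perm_ends_rem M p : p \in M -> perm_eq (ends M) (p.1 :: p.2 :: ends (rem p M)).
Proof.
move=> pM; exact: perm_flatten (perm_map (fun q : T * T => [:: q.1; q.2]) (perm_to_rem pM)).
Qed.

Lemma mem_ends (M : seq (T * T)) p : p \in M -> (p.1 \in ends M) && (p.2 \in ends M).
Proof.
by move=> pM; apply/andP; split; apply/flatten_mapP; exists p; rewrite // !inE eqxx ?orbT.
Qed.

Lemma card_le_count_ends (A : {set T}) M :
  {subset A <= ends M} -> #|A| <= \sum_(p <- M) count [in A] [:: p.1; p.2].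
Proof.
move=> sAM; have -> : \sum_(p <- M) count [in A] [:: p.1; p.2] = count [in A] (ends M).
  by rewrite count_flatten sumnE !big_map.
rewrite cardE -size_filter.
apply: uniq_leq_size (enum_uniq _) _ => z.
by rewrite mem_enum mem_filter => zA; rewrite zA sAM.
Qed.

Lemma matching_reroute (X : {set T}) M p u v :
  matching_in X M -> p \in M -> u \in X -> v \in X -> u != v ->
  u \notin ends M -> v \notin ends M -> e u p.1 -> e v p.2 ->
  matching_in X ((u, p.1) :: (v, p.2) :: rem p M).
Proof.
case/andP => uM /allP XM pM uX vX uv uM' vM' eu ev.
have pe := perm_ends_rem pM.
move: uM uM' vM'; rewrite !(perm_mem pe) (perm_uniq pe) /= !inE !negb_or.
case/and3P => /andP[p12 p1r] p2r ur /and3P[up1 up2 urem] /and3P[vp1 vp2 vrem].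
have /and3P[p1X p2X _] := XM p pM.
rewrite /matching_in !ends_cons /= !inE !negb_or uv up1 up2 urem eq_sym vp1 p12 p1r.
rewrite vp2 vrem p2r ur uX p1X eu vX p2X ev /=; apply/allP => q /mem_rem; exact: XM.
Qed.

Lemma card_unmatched (X : {set T}) M :
  #|X| <= #|[set z in X | z \notin ends M]| + 2 * size M.
Proof.
have -> : [set z in X | z \notin ends M] = X :\: [set z in ends M].
  by apply/setP => z; rewrite !inE andbC.
have := cardsID [set z in ends M] X; have := subset_leq_card (subsetIr X [set z in ends M]).
have : #|[set z in ends M]| <= 2 * size M by rewrite cardsE -size_ends card_size.
lia.
Qed.

(* The at least 2m > 2 |M| edges from u and v to matched vertices hit some
   matching edge three times. *)
Lemma crossing_matching_edge (X : {set T}) M m u v :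
  matching_in X M -> size M < m ->
  m <= #|[set z in X | e u z]| -> m <= #|[set z in X | e v z]| ->
  {subset [set z in X | e u z] <= ends M} -> {subset [set z in X | e v z] <= ends M} ->
  exists2 p, p \in M & (e u p.1 && e v p.2) || (e u p.2 && e v p.1).
Proof.
move=> hM hMm hu hv NuM NvM; pose N w := [set z in X | e w z].
have [p pM hp] : exists2 p, p \in M &
    2 < count [in N u] [:: p.1; p.2] + count [in N v] [:: p.1; p.2].
  apply: big_seq_gt_const; rewrite big_split.
  apply: leq_trans (leq_add (card_le_count_ends NuM) (card_le_count_ends NvM)).
  by apply: leq_trans (leq_add hu hv); rewrite addnn -mul2n ltn_mul2l.
exists p => //; have /and3P[p1X p2X _] := allP (proj2 (andP hM)) p pM.
move: hp; rewrite /N /= !inE p1X p2X /=.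
by case: (e u p.1); case: (e u p.2); case: (e v p.1); case: (e v p.2).
Qed.

Lemma matching_grow (X : {set T}) m M :
  2 * m <= #|X| -> (forall u, u \in X -> m <= #|[set z in X | e u z]|) ->
  matching_in X M -> size M < m ->
  exists M', matching_in X M' /\ size M' = (size M).+1.
Proof.
move=> hX hdeg hM hMm; set F := [set z in X | z \notin ends M].
have cardF : 1 < #|F| by have := card_unmatched X M; rewrite -/F; lia.
case: (boolP [exists a in F, exists b in F, e a b]).
  case/exists_inP => a; rewrite inE => /andP[aX aM] /exists_inP[b]; rewrite inE.
  case/andP => bX bM eab; exists ((a, b) :: M); split => //.
  case/andP: hM => uM XM; rewrite /matching_in ends_cons /= !inE negb_or.
  rewrite aM bM uM aX bX eab XM !andbT.
  by apply/eqP => ab; rewrite ab e_irr in eab.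
rewrite negb_exists_in => /forall_inP Find.
have [u [v [uF vF uv]]] := card_gt1P cardF.
have NM w : w \in F -> {subset [set z in X | e w z] <= ends M}.
  move=> wF z; rewrite inE => /andP[zX ewz]; apply: contraLR ewz => zM.
  have /exists_inPn /(_ z) := Find w wF; rewrite inE zX zM; exact.
move: (uF) (vF); rewrite !inE => /andP[uX uM] /andP[vX vM].
have [p pM] := crossing_matching_edge hM hMm (hdeg u uX) (hdeg v vX) (NM u uF) (NM v vF).
have size_rerouted a b : size ((a, p.1) :: (b, p.2) :: rem p M) = (size M).+1.
  by rewrite /= size_rem //; case: (M) pM.
case/orP => /andP[eu ev].
- exists ((u, p.1) :: (v, p.2) :: rem p M); split; last exact: size_rerouted.
  exact: matching_reroute.
- exists ((v, p.1) :: (u, p.2) :: rem p M); split; last exact: size_rerouted.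
  by apply: matching_reroute; rewrite // eq_sym.
Qed.

Lemma matching_mindeg (X : {set T}) m :
  2 * m <= #|X| -> (forall u, u \in X -> m <= #|[set z in X | e u z]|) ->
  exists M, matching_in X M /\ size M = m.
Proof.
move=> hX hdeg; suff : forall t, t <= m -> exists M, matching_in X M /\ size M = t by apply.
elim=> [|t IH] ht; first by exists [::].
have [M [hM sM]] := IH (ltnW ht).
have [|M' [hM' sM']] := matching_grow hX hdeg hM; first by rewrite sM.
by exists M'; rewrite sM' sM.
Qed.

End Matchings.

Section Gluing.
Variables (T : finType) (e : rel T).
Hypotheses (e_sym : symmetric e) (e_irr : irreflexive e).
Variables (r : nat) (X I : {set T}) (P : {set {set T}}).
Hypotheses (XI : [disjoint X & I]) (hP : clique_packing e r I P).

Definition glue (q : {set T} * (T * T)) : {set T} := q.1 :|: [set q.2.1; q.2.2].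

Definition adj_block (B : {set T}) a := [forall z in B, e a z].

Lemma card_nonadj_blocks a :
  #|[set B in P | ~~ adj_block B a]| <= #|non_nbrs e I a|.
Proof.
have [/trivIsetP tP sP] := hP; rewrite -sum1_card.
apply: (@leq_trans (\sum_(B in [set B in P | ~~ adj_block B a]) #|B :&: non_nbrs e I a|)).
  apply: leq_sum => B; rewrite inE => /andP[BP /forall_inPn[z zB naz]].
  have [sBI _ _] := sP B BP.
  by apply/card_gt0P; exists z; rewrite !inE zB (subsetP sBI z zB).
rewrite -card_bigcup_disjoint => [|B B']; last first.
  rewrite !inE => /andP[BP _] /andP[B'P _] BB'.
  exact: disjointW (subsetIl _ _) (subsetIl _ _) (tP B B' BP B'P BB').
by apply: subset_leq_card; apply/bigcupsP => B _; apply: subsetIr.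
Qed.

Lemma exists_adj_block (s : seq {set T}) a b :
  size s + #|non_nbrs e I a| + #|non_nbrs e I b| < #|P| ->
  exists2 B, B \in P & [&& B \notin s, adj_block B a & adj_block B b].
Proof.
move=> hs; set U := [set B in s] :|: [set B in P | ~~ adj_block B a]
                               :|: [set B in P | ~~ adj_block B b].
have /subsetPn[B BP] : ~~ (P \subset U).
  apply: contraL hs => /subset_leq_card sPU; rewrite -leqNgt.
  apply: leq_trans sPU (leq_trans (leq_card_setU _ _).1 _).
  apply: leq_add (card_nonadj_blocks b).
  apply: leq_trans (leq_card_setU _ _).1 (leq_add _ (card_nonadj_blocks a)).
  by rewrite cardsE card_size.
rewrite !inE BP !negb_or !negbK /= => /andP[/andP[Bs Ba] Bb].
by exists B; rewrite // Bs Ba Bb.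
Qed.

Lemma disjoint_block_pair B x y :
  B \in P -> x \in X -> y \in X -> [disjoint B & [set x; y]].
Proof.
have [_ sP] := hP; move=> /sP[sBI _ _] xX yX; rewrite disjoint_sym.
exact: disjointW (pair_subset xX yX) sBI XI.
Qed.

Lemma disjoint_glue B B' p p' :
  B \in P -> B' \in P -> B != B' ->
  p.1 \in X -> p.2 \in X -> p'.1 \in X -> p'.2 \in X ->
  [disjoint [set p.1; p.2] & [set p'.1; p'.2]] ->
  [disjoint glue (B, p) & glue (B', p')].
Proof.
have [/trivIsetP tP _] := hP.
move=> BP B'P BB' p1X p2X p'1X p'2X dpp'.
rewrite /glue /= -setI_eq0 setIUl (setIUr B) (setIUr [set p.1; p.2]).
rewrite (disjoint_setI0 (tP B B' BP B'P BB')).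
rewrite (disjoint_setI0 (disjoint_block_pair BP p'1X p'2X)) (disjoint_setI0 dpp').
by rewrite setIC (disjoint_setI0 (disjoint_block_pair B'P p1X p2X)) !set0U.
Qed.

Lemma assign_blocks m M :
  (forall a b, a \in X -> b \in X -> m + #|non_nbrs e I a| + #|non_nbrs e I b| < #|P|) ->
  matching_in e X M -> size M <= m ->
  exists c : seq ({set T} * (T * T)),
    [/\ map snd c = M, all (fun q => [&& q.1 \in P, adj_block q.1 q.2.1 & adj_block q.1 q.2.2]) c
      & pairwise (fun q q' => [disjoint glue q & glue q']) c].
Proof.
move=> hm; elim: M => [|p M IH] hM hMm; first by exists [::].
move: (hM); rewrite /matching_in ends_cons /= !inE negb_or.
case/and3P=> /and3P[/andP[_ p1M] p2M uM] /and3P[p1X p2X _] XM.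
have hM' : matching_in e X M by rewrite /matching_in uM XM.
have [c [cM cadj cdisj]] := IH hM' (ltnW hMm).
have [|B BP /and3P[Bc Ba Bb]] := @exists_adj_block (map fst c) p.1 p.2.
  rewrite size_map -(size_map snd) cM; apply: leq_ltn_trans (hm _ _ p1X p2X).
  by rewrite !leq_add2r; exact: ltnW hMm.
exists ((B, p) :: c); split => /=; [by rewrite cM | by rewrite BP Ba Bb | ].
rewrite cdisj andbT; apply/allP => q qc.
have /and3P[qP _ _] := allP cadj q qc.
have qM : q.2 \in M by rewrite -cM map_f.
have /andP[q1M q2M] := mem_ends qM.
have /and3P[q1X q2X _] := allP XM q.2 qM.
apply: disjoint_glue => //.
- by apply: contraNneq Bc => ->; rewrite map_f.
- rewrite -setI_eq0; apply/eqP/setP => z; rewrite !inE.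
  by apply/negP => /andP[/orP[]/eqP-> /orP[]/eqP zq]; move: p1M p2M; rewrite zq ?q1M ?q2M.
Qed.

Lemma card_glue B a b :
  B \in P -> a \in X -> b \in X -> a != b -> #|glue (B, (a, b))| = r.+2.
Proof.
move=> BP aX bX ab; have [_ /(_ B BP)[_ cardB _]] := hP.
rewrite /glue /= cardsU (disjoint_setI0 (disjoint_block_pair BP aX bX)) cards0 cards2 ab.
by rewrite cardB; lia.
Qed.

Lemma glue_clique B a b :
  B \in P -> adj_block B a -> adj_block B b -> e a b -> is_clique e (glue (B, (a, b))).
Proof.
move=> BP /forall_inP Ba /forall_inP Bb eab; have [_ /(_ B BP)[_ _ cB]] := hP.
have -> : glue (B, (a, b)) = a |: (b |: B) by apply/setP => z; rewrite !inE orbC -orbA.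
apply: is_cliqueU1 => // [|z]; last by rewrite !inE => /predU1P[->|/Ba]; rewrite // e_sym.
by apply: is_cliqueU1 => // z /Bb; rewrite e_sym.
Qed.

Lemma glue_meet B a b (A : {set T}) :
  B \in P -> A \subset glue (B, (a, b)) -> r < #|A| -> (a \in A) || (b \in A).
Proof.
move=> BP sAQ; have [_ /(_ B BP)[_ cardB _]] := hP.
apply: contraLR => /norP[aA bA]; rewrite -leqNgt -cardB; apply: subset_leq_card.
apply/subsetP => z zA; move: (subsetP sAQ z zA); rewrite !inE /=.
by case/or3P => // /eqP zab; rewrite -zab zA in aA bA.
Qed.

Lemma glued_factor m M :
  (forall a b, a \in X -> b \in X -> m + #|non_nbrs e I a| + #|non_nbrs e I b| < #|P|) ->
  matching_in e X M -> size M = m ->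
  exists F : {set {set T}},
    [/\ F \subset kcopies e r.+2, trivIset F, #|cover F| = r.+2 * m
      & forall Q (A : {set T}), Q \in F -> A \subset Q -> r < #|A| ->
          exists2 x, x \in A & x \in X].
Proof.
move=> hm hM sM; have [c [cM cadj cdisj]] := assign_blocks hm hM (eq_leq sM).
have cfacts B a b : (B, (a, b)) \in c ->
    [/\ B \in P, adj_block B a, adj_block B b & [&& a \in X, b \in X & e a b]].
  move=> qc; have /and3P[BP Ba Bb] := allP cadj _ qc.
  have abM : (a, b) \in M by rewrite -cM (map_f snd qc).
  by split => //; apply: (allP (proj2 (andP hM)) _ abM).
have glue_kcopy Q : Q \in map glue c -> Q \in kcopies e r.+2.
  case/mapP => -[B [a b]] /cfacts[BP Ba Bb /and3P[aX bX eab]] ->.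
  have ab : a != b by apply: contraTneq eab => ->; rewrite e_irr.
  by rewrite inE card_glue // eqxx glue_clique.
exists [set Q in map glue c]; split.
- by apply/subsetP => Q; rewrite inE; apply: glue_kcopy.
- by apply: trivIset_pairwise; rewrite pairwise_map.
- have sc : size c = m by rewrite -sM -cM size_map.
  rewrite (card_cover_pairwise (n := r.+2)) ?size_map ?sc ?pairwise_map //.
  by apply/allP => Q /glue_kcopy; rewrite inE => /andP[].
- move=> Q A; rewrite inE => /mapP[[B [a b]] /cfacts[BP _ _ /and3P[aX bX _]] ->] sAQ rA.
  by case/orP: (glue_meet BP sAQ rA) => ?; [exists a | exists b].
Qed.

End Gluing.

Section Components.
Variables (T : finType) (e : rel T) (k : nat).

Lemma kcomp_refl A : A \in kcopies e k -> A \in kcomp e k A.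
Proof. by move=> hA; rewrite inE hA /kconn connect0. Qed.

Lemma kcopy_sub_compV A : A \in kcopies e k -> A \subset compV (kcomp e k A).
Proof. by move=> hA; apply/subsetP => z zA; apply/bigcupP; exists A; rewrite ?kcomp_refl. Qed.

Lemma kconn_kcomp A B : B \in kcopies e k -> kcomp e k A = kcomp e k B -> kconn e k A B.
Proof. by move=> hB AB; move: (kcomp_refl hB); rewrite -AB inE => /andP[]. Qed.

Lemma mem_int_k C C' v : C \in kcomps e k -> C' \in kcomps e k -> C != C' ->
  v \in compV C -> v \in compV C' -> v \in int_k e k.
Proof.
move=> hC hC' CC' vC vC'; rewrite inE; apply/exists_inP; exists C => //.
by apply/exists_inP; exists C' => //; rewrite CC' vC vC'.
Qed.

Lemma compV_sub_ext_int C : C \in kcomps e k -> compV C \subset ext e k C :|: int_k e k.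
Proof.
move=> hC; apply/subsetP => v vC; rewrite in_setU.
have [|vI] := boolP (v \in int_k e k); first by rewrite orbT.
rewrite orbF inE vC /=.
apply/forall_inP => C' hC'; apply/implyP => C'C; apply: contra vI => vC'.
exact: mem_int_k hC' hC C'C vC' vC.
Qed.

Lemma kcomp_ext C A x : x \in ext e k C -> A \in kcopies e k -> x \in A -> kcomp e k A = C.
Proof.
rewrite inE => /andP[_ /forall_inP xC] hA xA; apply/eqP; apply: contraT => AC.
by have := xC _ (imset_f _ hA); rewrite AC (subsetP (kcopy_sub_compV hA) x xA).
Qed.

Lemma ext_int_disjoint C : [disjoint ext e k C & int_k e k].
Proof.
rewrite -setI_eq0; apply/eqP/setP => v; rewrite !inE; apply/negP.
case/andP=> /andP[_ /forall_inP vC] /exists_inP[D1 hD1 /exists_inP[D2 hD2 /and3P[D12 vD1 vD2]]].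
have [eD1|nD1] := eqVneq D1 C; last by have := vC _ hD1; rewrite nD1 vD1.
by have := vC _ hD2; rewrite -eD1 eq_sym D12 vD2.
Qed.

Lemma ext_disjoint C C' : C' \in kcomps e k -> C != C' -> [disjoint ext e k C & ext e k C'].
Proof.
move=> hC' CC'; rewrite -setI_eq0; apply/eqP/setP => v; rewrite !inE; apply/negP.
by case/andP=> /andP[_ /forall_inP /(_ C' hC')] + /andP[vC' _]; rewrite eq_sym CC' vC'.
Qed.

Lemma conn_factor_meeting_ext (C F : {set {set T}}) :
  F \subset kcopies e k.+1 -> trivIset F ->
  (forall Q A : {set T}, Q \in F -> A \subset Q -> A \in kcopies e k ->
     exists2 x, x \in A & x \in ext e k C) ->
  conn_factor e k F.
Proof.
move=> Fk tF meet; rewrite /conn_factor Fk tF /=.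
have compC A : A \in kcopies e k -> [exists Q in F, A \subset Q] -> kcomp e k A = C.
  move=> hA /exists_inP[Q QF sAQ]; have [x xA xC] := meet Q A QF sAQ hA.
  exact: kcomp_ext xC hA xA.
apply/forall_inP => A hA; apply/forall_inP => B hB; apply/implyP => /andP[AF BF].
by apply: (kconn_kcomp hB); rewrite (compC A hA AF) (compC B hB BF).
Qed.

End Components.

Section MinDegree.
Variables (T : finType) (e : rel T) (k delta : nat).
Hypotheses (e_sym : symmetric e) (e_irr : irreflexive e) (hk : 3 <= k).
Hypothesis hmindeg : forall v : T, delta <= #|[set w | e v w]|.
Hypothesis hdelta : (k - 1) * #|T| < k * delta.
Hypothesis hint : forall A : {set T}, A \in kcopies e k -> ~~ (A \subset int_k e k).
Variable C1 : {set {set T}}.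
Hypothesis hC1 : C1 \in kcomps e k.

Local Notation n := #|T|.
(* A bound on the number of non-neighbours of any vertex, itself included. *)
Local Notation d := (#|T| - delta).
Local Notation X := (ext e k C1).
Local Notation I := (int_k e k).
Local Notation Y := (~: (ext e k C1 :|: int_k e k)).

Lemma delta_le_card : delta <= n.
Proof.
have [A hA _] := imsetP hC1.
have /card_gt0P[v _] : 0 < #|A| by move: hA; rewrite inE => /andP[/eqP-> _]; lia.
exact: leq_trans (hmindeg v) (max_card _).
Qed.

Lemma card_non_nbrs_le (S : {set T}) v : #|non_nbrs e S v| <= d.
Proof.
have sub : non_nbrs e S v \subset ~: [set w | e v w].
  by apply/subsetP => z; rewrite !inE => /andP[].
have := subset_leq_card sub; have := cardsC [set w | e v w]; have := hmindeg v; lia.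
Qed.

Lemma mul_delta : k * delta = k * n - k * d.
Proof. by have := delta_le_card; rewrite mulnBr; have := leq_mul (leqnn k) delta_le_card; lia. Qed.

Lemma kd_lt_card : k * d < n.
Proof. by have := mul_delta; have := mulnBl k 1 n; rewrite mul1n; lia. Qed.

Lemma int_clique_free : clique_free e k I.
Proof.
move=> A sAI cardA; apply/negP => cA.
have hA : A \in kcopies e k by rewrite inE cardA eqxx.
by move: (hint hA); rewrite sAI.
Qed.

Lemma card_int_le : #|I| <= k.-1 * d.
Proof.
rewrite leqNgt; apply/negP => /(clique_exists e_sym e_irr (fun v _ => card_non_nbrs_le I v)).
by case=> A [sAI cA cardA]; move: (int_clique_free sAI cardA); rewrite cA.
Qed.

Lemma ext_nonadj_rest u w : u \in X -> w \in Y -> ~~ e u w.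
Proof.
move=> uX wY; apply/negP => euw.
have uw : u != w by apply: contraTneq euw => ->; rewrite e_irr.
have hr : k.-1 * d < #|[set: T]|.
  by rewrite cardsT; have := kd_lt_card; have := leq_mul (leq_pred k) (leqnn d); lia.
have [|A suwA [_ cA cardA]] := clique_extend e_sym e_irr
    (fun v _ => card_non_nbrs_le setT v) hr (is_clique2 e_sym euw) (subsetT _).
  by rewrite cards2 uw; lia.
have hA : A \in kcopies e k by rewrite inE cA cardA eqxx.
have wC1 : w \in compV C1.
  rewrite -(kcomp_ext uX hA (subsetP suwA u _)) ?inE ?eqxx //.
  by apply: (subsetP (kcopy_sub_compV hA)); apply: (subsetP suwA); rewrite !inE eqxx orbT.
by move: wY; rewrite in_setC (subsetP (compV_sub_ext_int hC1) w wC1).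
Qed.

Lemma card_non_nbrs_ext a : a \in X ->
  #|non_nbrs e I a| + #|Y| + #|non_nbrs e X a| <= d.
Proof.
move=> aX; apply: leq_trans (card_non_nbrs_le setT a).
by apply: card_non_nbrs_split; [apply: ext_int_disjoint | move=> w; apply: ext_nonadj_rest].
Qed.

Lemma card_ext_int_rest : #|X| + #|I| + #|Y| = n.
Proof. by rewrite -cardsU_disjoint ?ext_int_disjoint // cardsC. Qed.

Lemma sum_ext_other_le : \sum_(C in kcomps e k | C != C1) #|ext e k C| <= #|Y|.
Proof.
rewrite -card_bigcup_disjoint => [|C C' /andP[hC _] /andP[hC' _]]; last exact: ext_disjoint.
apply: subset_leq_card; apply/bigcupsP => C /andP[hC CC1]; apply/subsetP => v vC.
rewrite in_setC in_setU negb_or (disjointFr (ext_int_disjoint e k C) vC) andbT.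
by rewrite (disjointFl (ext_disjoint hC _) vC) // eq_sym.
Qed.

Lemma ext_nbrs_ge m u : m + (k - 1) * n <= k * delta -> u \in X ->
  m <= #|[set z in X | e u z]|.
Proof.
move=> hm uX; have := card_nbrs_non_nbrs e X u; have := card_non_nbrs_ext uX.
have := card_ext_int_rest; have := card_int_le; have := mul_delta.
have : (k - 1) * n = k * n - n by rewrite mulnBl mul1n.
have : k.-1 * d = k * d - d by rewrite -subn1 mulnBl mul1n.
lia.
Qed.

(* The first hypothesis amounts to m + |X| + k d <= |T| + |Y|, and each of a, b
   has at most d - |Y| - 1 non-neighbours in I. *)
Lemma sum_non_nbrs_int_lt m p a b :
  m + #|X| + (k - 1) * n <= k * delta + \sum_(C in kcomps e k | C != C1) #|ext e k C| ->
  #|I| <= p + k.-2 * d -> a \in X -> b \in X ->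
  m + #|non_nbrs e I a| + #|non_nbrs e I b| < p.
Proof.
move=> hm hp aX bX.
have nXa_gt0 c : c \in X -> 0 < #|non_nbrs e X c|.
  by move=> cX; apply/card_gt0P; exists c; rewrite inE cX e_irr.
have := card_non_nbrs_ext aX; have := card_non_nbrs_ext bX.
have := nXa_gt0 a aX; have := nXa_gt0 b bX.
have := sum_ext_other_le; have := card_ext_int_rest.
have := mul_delta; have := kd_lt_card; have := leq_mul (ltnW hk) (leqnn d).
have : (k - 1) * n = k * n - n by rewrite mulnBl mul1n.
have : k.-2 * d = k * d - 2 * d by rewrite -subn2 mulnBl.
lia.
Qed.

Lemma large_conn_factor m :
  m + (k - 1) * n <= k * delta -> 2 * m <= #|X| ->
  m + #|X| + (k - 1) * n <= k * delta + \sum_(C in kcomps e k | C != C1) #|ext e k C| ->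
  k.+1 * m <= CKF e k.
Proof.
move=> h1 h2 h3; have k_gt1 : 1 < k by lia.
have [P hP cardP] :=
  clique_free_packing e_sym e_irr k_gt1 int_clique_free (fun v _ => card_non_nbrs_le I v).
have [M [hM sM]] := matching_mindeg e_irr h2 (fun u uX => ext_nbrs_ge h1 uX).
have [F [Fk tF coverF meetF]] := glued_factor e_sym e_irr (ext_int_disjoint e k C1) hP
  (fun a b aX bX => sum_non_nbrs_int_lt h3 cardP aX bX) hM sM.
have ek : k.-1.+2 = k.+1 by lia.
rewrite ek in Fk coverF.
have cF : conn_factor e k F.
  apply: conn_factor_meeting_ext Fk tF _ => Q A QF sAQ.
  by rewrite inE => /andP[/eqP cardA _]; apply: meetF QF sAQ _; lia.
by rewrite -coverF; apply: leq_bigmax_cond.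
Qed.

End MinDegree.

Import Order.TTheory GRing.Theory Num.Theory.
Local Open Scope ring_scope.

Theorem lemma6p6 (T : finType) (e : rel T) (k delta : nat)
  (e_sym : symmetric e) (e_irr : irreflexive e)
  (hk : (3 <= k)%N)
  (hmindeg : forall v : T, (delta <= #|[set w | e v w]|)%N)
  (hdelta : ((k - 1) * #|T| < k * delta)%N)
  (htwo : (1 < #|kcomps e k|)%N)
  (hint : forall A : {set T}, A \in kcopies e k -> ~~ (A \subset int_k e k))
  (C1 : {set {set T}}) (hC1 : C1 \in kcomps e k) :
  let q' : int := (k * delta)%:Z - ((k - 1) * #|T|)%:Z
                  + (\sum_(C in kcomps e k | C != C1) #|ext e k C|)%:Z
                  - (#|ext e k C1|)%:Z in
  (k.+1)%:Z * Num.min ((k * delta)%:Z - ((k - 1) * #|T|)%:Z)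
                      (Num.min ((#|ext e k C1| %/ 2)%:Z) q')
    <= (CKF e k)%:Z.
Proof.
cbv zeta; set M := Num.min _ _.
have [M_le0|M_gt0] := leP M 0.
  by apply: le_trans (_ : _ <= 0) _; rewrite // pmulr_rle0.
have [m Mm] : exists m : nat, M = m%:Z by exists `|M|%N; rewrite abszE ger0_norm // ltW.
have : m%:Z <= M by rewrite Mm.
rewrite [in X in X -> _]/M !le_min => /and3P[h1 h2 h3].
rewrite Mm -PoszM lez_nat.
apply: (large_conn_factor e_sym e_irr hk hmindeg hdelta hint hC1); lia.
Qed.
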